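(* Let $T$ be a decomposition tree of a distance-hereditary graph $G$ and let $v$ be an internal node of $T$. Suppose that (1) $\hat\gamma_0(v)=\hat{min}(v)+\hat\alpha(v)$; (2) $\hat\gamma_{|\hat{TS}(v)|}(v)=\hat{min}(v)+|\hat{TS}(v)|-\hat\beta(v)$; and (3) $\hat\gamma_{\hat\alpha(v)+2i}(v)=\hat{min}(v)$ for all integers $0\le i\le(\hat\beta(v)-\hat\alpha(v))/2$. Then for every integer $0\le k\le|\hat{TS}(v)|$, $$\hat\gamma_k(v)=\begin{cases}\hat{min}(v)+\hat\alpha(v)-k & \text{if } 0\le k\le\hat\alpha(v),\\ \hat{min}(v)+k-\hat\beta(v) & \text{if } \hat\beta(v)\le k\le|\hat{TS}(v)|,\\ \hat{min}(v) & \text{if } \hat\alpha(v)<k<\hat\beta(v)\text{ and } k-\hat\alpha(v)\text{ is even},\\ \hat{min}(v)+1 & \text{otherwise.}\end{cases}$$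
   Context: All graphs are finite, simple, undirected. For a graph $H$ and $S\subseteq V(H)$, $N_H[S]$ is $S$ together with all vertices adjacent to a vertex of $S$, and $H[S]$ is the induced subgraph. Graphs carry a ''twin set'': a single-vertex graph on $x$ has twin set $\{x\}$. For vertex-disjoint graphs $G_l,G_r$ with twin sets $TS(G_l),TS(G_r)$: the true twin operation $G_l\otimes G_r$ has vertex set $V(G_l)\cup V(G_r)$, edge set $E(G_l)\cup E(G_r)\cup\{uw: u\in TS(G_l), w\in TS(G_r)\}$ and twin set $TS(G_l)\cup TS(G_r)$; the false twin operation $G_l\odot G_r$ has vertex set $V(G_l)\cup V(G_r)$, edge set $E(G_l)\cup E(G_r)$, twin set $TS(G_l)\cup TS(G_r)$; the attachment operation $G_l\oplus G_r$ has the same vertex and edge sets as $G_l\otimes G_r$ and twin set $TS(G_l)$. A decomposition tree $T$ of $G$ is a rooted binary tree whose leaves are in bijection with $V(G)$, each internal node having a left and a right child and a label in $\{\otimes,\odot,\oplus\}$; for each node $v$ define $\hat G(v)$ and $\hat{TS}(v)$ recursively: for a leaf $x$, the single-vertex graph on $x$ with twin set $\{x\}$; for an internal node $v$ with label $\circ$ and children $v_l,v_r$, $\hat G(v)=\hat G(v_l)\circ\hat G(v_r)$ with the corresponding twin set; one requires $\hat G(\text{root})=G$. Then $\hat G(v)$ is the subgraph of $G$ induced by the set $\hat V(v)$ of leaves below $v$. For a node $v$ and $0\le k\le|\hat{TS}(v)|$, call $S\subseteq\hat V(v)$ $k$-feasible if $\hat V(v)\setminus\hat{TS}(v)\subseteq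 N_{\hat G(v)}[S]$ and there is $X\subseteq S\cap\hat{TS}(v)$ with $|X|=k$ such that $\hat G(v)[S\setminus X]$ has a perfect matching. $\hat\gamma_k(v)$ is the minimum size of a $k$-feasible set. $\hat{min}(v)=\min\{\hat\gamma_k(v):0\le k\le|\hat{TS}(v)|\}$, and $\hat\alpha(v)$, $\hat\beta(v)$ are the smallest and the largest $k$ with $\hat\gamma_k(v)=\hat{min}(v)$. *)

From mathcomp Require Import all_boot.
Set Implicit Arguments. Unset Strict Implicit. Unset Printing Implicit Defensive.

Inductive dop := TrueTwin | FalseTwin | Attach.

Inductive dtree (V : Type) :=
  | DLeaf of V
  | DNode of dop & dtree V & dtree V.
Arguments DLeaf {V} _.
Arguments DNode {V} _ _ _.

Section DT.
Variable V : finType.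

Fixpoint dleaves (t : dtree V) : seq V :=
  match t with
  | DLeaf x => [:: x]
  | DNode _ l r => dleaves l ++ dleaves r
  end.

Definition dV (t : dtree V) : {set V} := [set x in dleaves t].

Fixpoint dTS (t : dtree V) : {set V} :=
  match t with
  | DLeaf x => [set x]
  | DNode TrueTwin l r => dTS l :|: dTS r
  | DNode FalseTwin l r => dTS l :|: dTS r
  | DNode Attach l r => dTS l
  end.

Fixpoint dedge (t : dtree V) : rel V :=
  match t with
  | DLeaf _ => fun _ _ => false
  | DNode FalseTwin l r => fun x y => dedge l x y || dedge r x y
  | DNode _ l r => fun x y =>
      [|| dedge l x y, dedge r x y,
          (x \in dTS l) && (y \in dTS r) | (y \in dTS l) && (x \in dTS r)]
  end.

Fixpoint subtree (v T : dtree V) : Prop :=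
  v = T \/ match T with
           | DLeaf _ => False
           | DNode _ l r => subtree v l \/ subtree v r
           end.

Definition is_internal (v : dtree V) : bool :=
  if v is DNode _ _ _ then true else false.

Definition decomposition_tree (g : rel V) (T : dtree V) : Prop :=
  [/\ uniq (dleaves T), (forall x, x \in dleaves T) & (forall x y, dedge T x y = g x y)].

Definition simple_graph (g : rel V) : Prop := symmetric g /\ irreflexive g.

Definition walk_in (g : rel V) (S : {set V}) (u w : V) (p : seq V) : bool :=
  [&& u \in S, path g u p, last u p == w & all (fun x => x \in S) p].

(* distance-hereditary: every connected induced subgraph is isometric *)
Definition distance_hereditary (g : rel V) : Prop :=
  forall S : {set V},
    (forall u w, u \in S -> w \in S -> exists p, walk_in g S u w p) ->
    forall u w p, walk_in g setT u w p ->
      u \in S -> w \in S -> exists q, walk_in g S u w q /\ size q <= size p.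

Definition perfect_matching (e : rel V) (A : {set V}) : bool :=
  [exists M : {set {set V}},
     [forall m in M, [exists x, [exists y,
        [&& x \in A, y \in A, x != y, e x y & m == [set x; y]]]]]
     && [forall x in A, #|[set m in M | x \in m]| == 1]].

Definition feasible (t : dtree V) (k : nat) (S : {set V}) : bool :=
  [&& S \subset dV t,
      [forall u in dV t :\: dTS t, (u \in S) || [exists w in S, dedge t w u]] &
      [exists X : {set V},
         [&& X \subset S :&: dTS t, #|X| == k & perfect_matching (dedge t) (S :\: X)]]].

(* \hat\gamma_k(v); the default #|V|.+1 is never reached for k <= |TS| since
   k-feasible sets always exist. *)
Definition gamma (t : dtree V) (k : nat) : nat :=
  \big[minn/#|V|.+1]_(S : {set V} | feasible t k S) #|S|.

Definition gmin (t : dtree V) : nat :=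
  \big[minn/#|V|.+1]_(k < #|dTS t|.+1) gamma t k.

Definition galpha (t : dtree V) : nat :=
  \big[minn/#|dTS t|.+1]_(k < #|dTS t|.+1 | gamma t k == gmin t) (k : nat).

Definition gbeta (t : dtree V) : nat :=
  \max_(k < #|dTS t|.+1 | gamma t k == gmin t) (k : nat).

End DT.

(* The two facts that drive the proof are a unit-step bound and a parity law
   for k |-> gamma_k.  Given a k-feasible S with matched part S \ X, moving
   one twin vertex into or out of X frees a single vertex x of S; x is then
   either matched to a neighbour outside S or dropped from S, so
   gamma_{k+1} <= gamma_k + 1 and gamma_k <= gamma_{k+1} + 1.  Since S \ X
   is perfectly matched, |S| = k (mod 2), hence gamma_k = k (mod 2).
   Hypotheses (1) and (2) together with the step bound force the two linear
   branches; between alpha and beta hypothesis (3) gives the even offsets,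
   and at an odd offset gamma_k <= gamma_{k-1} + 1 = min + 1 while parity
   rules out min. *)

From mathcomp Require Import all_boot zify.
Set Implicit Arguments. Unset Strict Implicit. Unset Printing Implicit Defensive.

Section DecompositionTree.
Variable V : finType.
Implicit Types (t l r : dtree V) (o : dop).

Lemma dV_node o l r : dV (DNode o l r) = dV l :|: dV r.
Proof. by apply/setP=> x; rewrite !inE mem_cat. Qed.

Lemma dTS_subset t : dTS t \subset dV t.
Proof.
elim: t => [x|o l IHl r IHr]; first by rewrite sub1set inE mem_seq1.
rewrite dV_node; case: o => /=; rewrite ?setUSS //.
exact: subset_trans IHl (subsetUl _ _).
Qed.

Lemma dTS_neq0 t : dTS t != set0.
Proof.
elim: t => [x|[] l IHl r _] /=; first by apply/set0Pn; exists x; rewrite inE.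
- by rewrite setU_eq0 negb_and IHl.
- by rewrite setU_eq0 negb_and IHl.
- exact: IHl.
Qed.

Lemma dedge_sym t : symmetric (dedge t).
Proof.
move=> x y; elim: t => [z|o l IHl r IHr] //; case: o => /=; rewrite IHl IHr //;
by case: (x \in dTS l) (y \in dTS l) (x \in dTS r) (y \in dTS r) => [] [] [] [];
  rewrite /= ?orbT ?orbF.
Qed.

Lemma dedge_dV t x y : dedge t x y -> x \in dV t.
Proof.
elim: t y => [z|o l IHl r IHr] y //; rewrite dV_node inE.
have inl z : z \in dTS l -> z \in dV l by apply: (subsetP (dTS_subset l)).
have inr z : z \in dTS r -> z \in dV r by apply: (subsetP (dTS_subset r)).
case: o => /=;
  first [case/or4P=> [/IHl->|/IHr->|/andP[/inl->]|/andP[_ /inr->]]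
        | case/orP=> [/IHl->|/IHr->]]; by rewrite ?orbT.
Qed.

Lemma dedge_exists t u : u \in dV t -> u \notin dTS t -> exists w, dedge t u w.
Proof.
elim: t => [z|o l IHl r IHr]; first by rewrite !inE => ->.
rewrite dV_node in_setU; case: o => /=; rewrite ?in_setU ?negb_or.
- case/orP=> uV /andP[ul ur].
  + by have [w e] := IHl uV ul; exists w; rewrite e.
  + by have [w e] := IHr uV ur; exists w; rewrite e orbT.
- case/orP=> uV /andP[ul ur].
  + by have [w e] := IHl uV ul; exists w; rewrite e.
  + by have [w e] := IHr uV ur; exists w; rewrite e orbT.
- case/orP=> uV ul; first by have [w e] := IHl uV ul; exists w; rewrite e.
  have [ur|ur] := boolP (u \in dTS r); last first.
    by have [w e] := IHr uV ur; exists w; rewrite e orbT.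
  have /set0Pn[w wl] := dTS_neq0 l; by exists w; rewrite wl !orbT.
Qed.

Lemma dedge_irr t u : uniq (dleaves t) -> dedge t u u = false.
Proof.
elim: t => [z|o l IHl r IHr] //=; rewrite cat_uniq => /and3P[ul lr ur].
have notboth : (u \in dTS l) && (u \in dTS r) = false.
  apply/negbTE/andP=> [[/(subsetP (dTS_subset l)) ulV /(subsetP (dTS_subset r)) urV]].
  by rewrite !inE in ulV urV; case/hasP: lr; exists u.
by case: o => /=; rewrite IHl // IHr // notboth.
Qed.

Lemma subtree_uniq (v T : dtree V) :
  subtree v T -> uniq (dleaves T) -> uniq (dleaves v).
Proof.
elim: T => [z|o l IHl r IHr] /=; first by case=> // ->.
case=> [-> //|[/IHl sub|/IHr sub]]; rewrite cat_uniq => /and3P[ul _ ur].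
- exact: sub ul.
- exact: sub ur.
Qed.

End DecompositionTree.

Section PerfectMatching.
Variables (V : finType) (e : rel V).
Implicit Types (A : {set V}) (M : {set {set V}}).

Lemma perfect_matchingP A :
  reflect (exists M,
             (forall m, m \in M ->
                exists x y, [/\ x \in A, y \in A, x != y, e x y & m = [set x; y]])
             /\ (forall x, x \in A -> #|[set m in M | x \in m]| = 1))
          (perfect_matching e A).
Proof.
apply: (iffP existsP) => [[M /andP[/forall_inP edges /forall_inP cover]]|].
  exists M; split => [m /edges/existsP[x /existsP[y]]|x /cover/eqP //].
  by case/and5P=> xA yA xy exy /eqP ->; exists x, y.
case=> M [edges cover]; exists M; apply/andP; split; apply/forall_inP.
  move=> m /edges[x [y [xA yA xy exy ->]]]; apply/existsP; exists x.
  by apply/existsP; exists y; rewrite xA yA xy exy eqxx.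
by move=> x /cover ->.
Qed.

Lemma perfect_matching0 : perfect_matching e set0.
Proof. by apply/perfect_matchingP; exists set0; split=> ?; rewrite inE. Qed.

Lemma perfect_matchingU2 A u w :
  perfect_matching e A -> u \notin A -> w \notin A -> u != w -> e u w ->
  perfect_matching e (A :|: [set u; w]).
Proof.
move=> /perfect_matchingP[M [edges cover]] uA wA uw euw.
have subA m : m \in M -> m \subset A.
  by case/edges=> x [y [xA yA _ _ ->]]; rewrite subUset !sub1set xA yA.
apply/perfect_matchingP; exists ([set u; w] |: M); split.
  move=> m; rewrite in_setU1 => /predU1P[->|/edges[x [y [xA yA xy exy ->]]]].
    by exists u, w; rewrite !inE !eqxx !orbT; split.
  by exists x, y; rewrite !inE xA yA; split.
move=> z; rewrite in_setU => /orP[zA|zuw].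
  have zuw : (z \in [set u; w]) = false.
    by apply/negbTE; apply: contraL zA; rewrite !inE => /orP[]/eqP->.
  rewrite -(cover z zA); apply: eq_card => m; rewrite !inE.
  by case: (eqVneq m [set u; w]) => [->|] //=; rewrite zuw !andbF.
rewrite -(cards1 [set u; w]); apply: eq_card => m; rewrite !inE.
case: (eqVneq m [set u; w]) => [->|_] //=; apply/negbTE/andP=> [[mM zm]].
have := subsetP (subA m mM) z zm.
by move: zuw; rewrite !inE => /orP[]/eqP->; rewrite ?(negbTE uA) ?(negbTE wA).
Qed.

Lemma perfect_matchingD2 A x : perfect_matching e A -> x \in A ->
  exists2 y, y \in A :\ x & (e x y || e y x) && perfect_matching e (A :\: [set x; y]).
Proof.
move=> /perfect_matchingP[M [edges cover]] xA.
have uniq_edge z m1 m2 :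
    z \in A -> m1 \in M -> z \in m1 -> m2 \in M -> z \in m2 -> m1 = m2.
  move=> zA m1M zm1 m2M zm2; have /eqP/cards1P[m0 Ez] := cover z zA.
  have : m1 \in [set m in M | z \in m] by rewrite inE m1M zm1.
  have : m2 \in [set m in M | z \in m] by rewrite inE m2M zm2.
  by rewrite Ez !inE => /eqP -> /eqP ->.
have /eqP/cards1P[m0 Ex] := cover x xA.
have /setP/(_ m0) := Ex; rewrite !inE eqxx => /andP[m0M xm0].
have [y [yA yx exy m0E]] :
    exists y, [/\ y \in A, y != x, e x y || e y x & m0 = [set x; y]].
  have [a [b [aA bA ab eab m0ab]]] := edges _ m0M.
  move: xm0; rewrite m0ab !inE => /orP[]/eqP xE; subst x.
    by exists b; rewrite eq_sym ab eab.
  by exists a; rewrite ab eab orbT setUC.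
exists y; first by rewrite !inE yx.
rewrite exy /=; apply/perfect_matchingP; exists (M :\ m0); split.
  move=> m; rewrite !inE => /andP[mm0 mM].
  have [a [b [aA bA ab eab mab]]] := edges _ mM.
  have off z : z \in m -> (z != x) && (z != y).
    move=> zm; apply/andP; split; apply: contra mm0 => /eqP zE; apply/eqP.
      by apply: (uniq_edge x _ _ xA mM _ m0M xm0); rewrite -zE.
    apply: (uniq_edge y _ _ yA mM _ m0M); first by rewrite -zE.
    by rewrite m0E !inE eqxx orbT.
  exists a, b; split => //; rewrite !inE negb_or ?aA ?bA andbT;
    by apply: off; rewrite mab !inE eqxx ?orbT.
move=> z; rewrite !inE negb_or => /andP[/andP[zx zy] zA].
rewrite -(cover z zA); apply: eq_card => m; rewrite !inE.
by case: (eqVneq m m0) => [->|] //=; rewrite m0E !inE (negbTE zx) (negbTE zy) !andbF.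
Qed.

Lemma perfect_matching_even A : perfect_matching e A -> ~~ odd #|A|.
Proof.
have [n ltAn] := ubnP #|A|; elim: n A ltAn => // n IHn A ltAn pmA.
have [->|[x xA]] := set_0Vmem A; first by rewrite cards0.
have [y yA /andP[_ pmAxy]] := perfect_matchingD2 pmA xA.
move: yA; rewrite !inE => /andP[yx yA].
have xyA : [set x; y] \subset A by rewrite subUset !sub1set xA yA.
have cardA : #|A| = #|A :\: [set x; y]| + 2.
  by rewrite -(cardsID [set x; y] A) (setIidPr xyA) cards2 eq_sym yx addnC.
rewrite cardA addn2 /= negbK; apply: IHn pmAxy; lia.
Qed.

End PerfectMatching.

Section Feasibility.
Variables (V : finType) (t : dtree V).
Implicit Types (S X : {set V}).

Definition dominates S := forall u, u \in dV t -> u \notin dTS t -> u \notin S ->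
  exists2 w, w \in S & dedge t w u.

Lemma dominatesS S S' : S \subset S' -> dominates S -> dominates S'.
Proof.
move=> sSS' domS u uV uT uS'.
have [w wS wu] := domS u uV uT (contra (subsetP sSS' u) uS').
by exists w; first exact: (subsetP sSS').
Qed.

Lemma feasibleP k S :
  reflect [/\ S \subset dV t, dominates S &
             exists X, [/\ X \subset S, X \subset dTS t, #|X| = k &
                           perfect_matching (dedge t) (S :\: X)]]
          (feasible t k S).
Proof.
apply: (iffP and3P) =>
  [[SV /forall_inP domS /existsP[X]]|[SV domS [X [XS XT Xk pmX]]]].
  rewrite subsetI -andbA => /and4P[XS XT /eqP Xk pmX]; split=> //; last by exists X.
  move=> u uV uT uS.
  by have := domS u; rewrite in_setD uT uV (negbTE uS) => /(_ isT)/exists_inP.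
split=> //; last by apply/existsP; exists X; rewrite subsetI XS XT Xk eqxx.
apply/forall_inP=> u; rewrite in_setD => /andP[uT uV].
by have [//|uS] := boolP (u \in S); have [w wS wu] := domS u uV uT uS;
  apply/exists_inP; exists w.
Qed.

Lemma odd_feasible k S : feasible t k S -> odd #|S| = odd k.
Proof.
case/feasibleP=> _ _ [X [XS _ <- pmX]].
by rewrite -(cardsID X S) (setIidPr XS) oddD (negbTE (perfect_matching_even pmX)) addbF.
Qed.

(* A vertex x of S outside the matched part is either matched to a new
   neighbour outside S or, if it has none, removed from S. *)
Lemma feasible_unmatched S X x :
  S \subset dV t -> dominates S -> X \subset S -> X \subset dTS t ->
  x \in S -> x \notin X -> perfect_matching (dedge t) (S :\: X :\ x) ->
  (x \in dTS t \/ exists2 w, w \in S :\ x & dedge t w x) ->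
  exists2 S', feasible t #|X| S' & #|S'| <= #|S|.+1.
Proof.
move=> SV domS XS XT xS xX pmSXx xcovered.
have [/existsP[q /andP[xq qS]]|/existsPn xNS] :=
  boolP [exists q, dedge t x q && (q \notin S)].
  have qX : q \notin X by apply: contra qS; apply: (subsetP XS).
  have qV : q \in dV t by rewrite (dedge_dV (y := x)) // dedge_sym.
  exists (q |: S); last by rewrite cardsU1 qS.
  apply/feasibleP; split.
  - by rewrite subUset sub1set SV qV.
  - exact: dominatesS (subsetUr _ _) domS.
  exists X; split=> //; first exact: subset_trans XS (subsetUr _ _).
  have -> : (q |: S) :\: X = (S :\: X :\ x) :|: [set x; q].
    apply/setP=> y; rewrite !inE.
    have [->|yx] := eqVneq y x; first by rewrite xS xX orbT.
    have [->|yq] := eqVneq y q; first by rewrite (negbTE qX) !orbT.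
    by rewrite /= ?orbF andbC.
  apply: perfect_matchingU2 => //; rewrite ?inE ?eqxx ?(negbTE qS) ?andbF //.
  by apply: contraNneq qS => <-.
exists (S :\ x); last exact/leqW/subset_leq_card/subsetDl.
apply/feasibleP; split.
- exact: subset_trans (subsetDl _ _) SV.
- move=> u uV uT; rewrite !inE negb_and negbK => /orP[/eqP ux|uS].
    by case: xcovered => [xT|]; [rewrite ux xT in uT | rewrite ux].
  have [w wS wu] := domS u uV uT uS; exists w => //.
  rewrite !inE wS andbT; apply: contraNneq uS => wx.
  by have := xNS u; rewrite -wx wu /= negbK.
have XSx : X \subset S :\ x by rewrite subsetD1 XS.
by exists X; rewrite setDDl setUC -setDDl.
Qed.

Lemma feasible_succ k S : feasible t k S -> k < #|dTS t| ->
  exists2 S', feasible t k.+1 S' & #|S'| <= #|S|.+1.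
Proof.
case/feasibleP=> SV domS [X [XS XT kE pmSX]] kTS.
have [TS_S|/subsetPn[x xT xS]] := boolP (dTS t \subset S); last first.
  have xX : x \notin X by apply: contra xS; apply: (subsetP XS).
  exists (x |: S); last by rewrite cardsU1 xS.
  apply/feasibleP; split.
  - by rewrite subUset sub1set (subsetP (dTS_subset t)).
  - exact: dominatesS (subsetUr _ _) domS.
  exists (x |: X); split; rewrite ?setUS ?subUset ?sub1set ?xT ?cardsU1 ?xX ?kE //.
  suff -> : (x |: S) :\: (x |: X) = S :\: X by [].
  by apply/setP=> z; rewrite !inE; case: eqVneq => [->|]; rewrite ?(negbTE xS) ?andbF.
have /subsetPn[y yT yX] : ~~ (dTS t \subset X).
  by apply: contraL kTS => /subset_leq_card; rewrite kE -leqNgt.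
have yS : y \in S := subsetP TS_S y yT.
have ySX : y \in S :\: X by rewrite inE yX yS.
have [p] := perfect_matchingD2 pmSX ySX.
rewrite !inE => /and3P[py pX pS] /andP[yp pmSXyp].
have <- : #|y |: X| = k.+1 by rewrite cardsU1 yX kE.
apply: (feasible_unmatched SV domS _ _ pS); rewrite ?subUset ?sub1set ?yS ?yT ?XS ?XT //.
- by rewrite !inE negb_or py pX.
- suff -> : S :\: (y |: X) :\ p = S :\: X :\: [set y; p] by [].
  by rewrite !setDDl -setUA setUCA.
- right; exists y; first by rewrite !inE eq_sym py yS.
  by case/orP: yp; rewrite // dedge_sym.
Qed.

Lemma feasible_pred k S : feasible t k.+1 S ->
  exists2 S', feasible t k S' & #|S'| <= #|S|.+1.
Proof.
case/feasibleP=> SV domS [X [XS XT kE pmSX]].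
have /set0Pn[x xX] : X != set0 by rewrite -card_gt0 kE.
have <- : #|X :\ x| = k by move: kE; rewrite (cardsD1 x) xX => -[].
apply: (feasible_unmatched SV domS _ _ (subsetP XS x xX)).
- exact: subset_trans (subsetDl _ _) XS.
- exact: subset_trans (subsetDl _ _) XT.
- by rewrite !inE eqxx.
- by rewrite setDDl setUC setD1K.
- by left; apply: (subsetP XT).
Qed.

Lemma feasible0_exists : uniq (dleaves t) -> exists S, feasible t 0 S.
Proof.
move=> uniq_t.
pose P S := (S \subset dV t) && perfect_matching (dedge t) S.
have P0 : P set0 by rewrite /P sub0set perfect_matching0.
(* A largest perfectly matched vertex set dominates every non-twin vertex. *)
have [S /andP[SV pmS] maxS] := arg_maxnP (fun S => #|S|) P0.
exists S; apply/feasibleP; split=> //; last first.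
  by exists set0; rewrite !sub0set cards0 setD0; split.
move=> u uV uT uS; apply/exists_inP/contraT => /exists_inPn noDom.
have [w uw] := dedge_exists uV uT.
have wS : w \notin S by apply: contraL uw => /noDom; rewrite dedge_sym.
have wV : w \in dV t by rewrite (dedge_dV (y := u)) // dedge_sym.
have uw' : u != w by apply: contraTneq uw => ->; rewrite dedge_irr.
have /maxS : P (S :|: [set u; w]).
  by rewrite /P subUset SV subUset !sub1set uV wV perfect_matchingU2.
by rewrite /= leqNgt proper_card // properUl // subUset sub1set (negbTE uS).
Qed.

End Feasibility.

Section BigMinn.
Variables (I : finType) (P : pred I) (F : I -> nat) (d : nat).

Lemma bigminn_le_cond i : P i -> \big[minn/d]_(j | P j) F j <= F i.
Proof.
move=> Pi; have : i \in index_enum I by rewrite mem_index_enum.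
elim: (index_enum I) => // x r IHr; rewrite inE big_cons => /predU1P[<-|ir].
  by rewrite Pi geq_minl.
by case: (P x); rewrite ?geq_min IHr ?orbT.
Qed.

Lemma eq_bigminn_cond i0 : P i0 -> F i0 <= d ->
  exists2 i, P i & \big[minn/d]_(j | P j) F j = F i.
Proof.
move=> Pi0 Fi0d; have [i Pi minFi] := arg_minnP F Pi0.
exists i => //; apply/eqP; rewrite eqn_leq bigminn_le_cond //=.
apply: (big_ind (fun z => F i <= z)) => [|x y Fix Fiy|j /minFi //].
  exact: leq_trans (minFi _ Pi0) Fi0d.
by rewrite leq_min Fix Fiy.
Qed.

End BigMinn.

Section Gamma.
Variables (V : finType) (t : dtree V).
Local Notation n := #|dTS t|.

Lemma gamma_le_card k S : feasible t k S -> gamma t k <= #|S|.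
Proof. exact: bigminn_le_cond. Qed.

Lemma gmin_le_gamma k : k <= n -> gmin t <= gamma t k.
Proof.
by move=> kn; apply: (@bigminn_le_cond _ xpredT _ _ (Ordinal (kn : k < n.+1))).
Qed.

Hypothesis uniq_t : uniq (dleaves t).

Lemma feasible_exists k : k <= n -> exists S, feasible t k S.
Proof.
elim: k => [|k IHk] kn; first exact: feasible0_exists.
have [S fS] := IHk (ltnW kn); have [S' fS' _] := feasible_succ fS kn.
by exists S'.
Qed.

Lemma gamma_feasible k : k <= n -> exists2 S, feasible t k S & gamma t k = #|S|.
Proof.
move=> kn; have [S fS] := feasible_exists kn.
by apply: eq_bigminn_cond fS _; rewrite ltnW // ltnS max_card.
Qed.

Lemma gamma_succ_le k : k < n -> gamma t k.+1 <= (gamma t k).+1.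
Proof.
move=> kn; have [S fS ->] := gamma_feasible (ltnW kn).
have [S' fS' S'S] := feasible_succ fS kn.
exact: leq_trans (gamma_le_card fS') S'S.
Qed.

Lemma gamma_le_succ k : k < n -> gamma t k <= (gamma t k.+1).+1.
Proof.
move=> kn; have [S fS ->] := gamma_feasible kn.
have [S' fS' S'S] := feasible_pred fS.
exact: leq_trans (gamma_le_card fS') S'S.
Qed.

Lemma odd_gamma k : k <= n -> odd (gamma t k) = odd k.
Proof. by move=> kn; have [S fS ->] := gamma_feasible kn; exact: odd_feasible fS. Qed.

Lemma gmin_attained : exists2 k, k <= n & gamma t k = gmin t.
Proof.
have [S fS gS] := gamma_feasible (leq0n n).
have [|i _ gmin_i] :=
  @eq_bigminn_cond _ xpredT (fun i : 'I_n.+1 => gamma t i) #|V|.+1 ord0 isT.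
  by rewrite /= gS ltnW // ltnS max_card.
by exists i; [rewrite -ltnS | rewrite /gmin gmin_i].
Qed.

Lemma galpha_spec : galpha t <= n /\ gamma t (galpha t) = gmin t.
Proof.
have [j jn gj] := gmin_attained; rewrite /galpha.
have [||i /eqP gi ->] := @eq_bigminn_cond _ (fun i : 'I_n.+1 => gamma t i == gmin t)
  (fun i => i : nat) n.+1 (Ordinal (jn : j < n.+1)); rewrite /= ?gj //.
  exact: leqW.
by split; [rewrite -ltnS | ].
Qed.

Lemma gbeta_spec : gbeta t <= n /\ gamma t (gbeta t) = gmin t.
Proof.
have [j jn gj] := gmin_attained; rewrite /gbeta.
have [|i /eqP gi ->] := @eq_bigmax_cond _ (fun i : 'I_n.+1 => gamma t i == gmin t)
  (fun i => i : nat).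
  by apply/card_gt0P; exists (Ordinal (jn : j < n.+1)); rewrite unfold_in /= gj.
by split; [rewrite -ltnS | ].
Qed.

End Gamma.

Section UnitStepProfile.
Variables (f : nat -> nat) (n : nat).
Hypothesis f_succ_le : forall k, k < n -> f k.+1 <= (f k).+1.
Hypothesis f_le_succ : forall k, k < n -> f k <= (f k.+1).+1.

Lemma unit_step_bounds i d :
  i + d <= n -> f (i + d) <= f i + d /\ f i <= f (i + d) + d.
Proof.
elim: d => [|d IHd] idn; first by rewrite !addn0.
rewrite addnS in idn *; have [IH1 IH2] := IHd (ltnW idn).
have := f_succ_le idn; have := f_le_succ idn; lia.
Qed.

Lemma profile_left m a k : a <= n -> f a = m -> f 0 = m + a -> k <= a ->
  f k = m + (a - k).
Proof.
move=> an fa f0 ka.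
have [_ fk_ge] := @unit_step_bounds 0 k (leq_trans ka an).
have := @unit_step_bounds k (a - k); rewrite subnKC // => /(_ an) [_ fk_le].
by move: fk_ge fk_le; rewrite add0n f0 fa; lia.
Qed.

Lemma profile_right m b k : k <= n -> f b = m -> f n = m + (n - b) -> b <= k ->
  f k = m + (k - b).
Proof.
move=> kn fb fn bk.
have := @unit_step_bounds b (k - b); rewrite subnKC // => /(_ kn) [fk_le _].
have := @unit_step_bounds k (n - k); rewrite subnKC // => /(_ (leqnn n)) [fk_ge _].
by move: fk_le fk_ge; rewrite fn fb; lia.
Qed.

Lemma profile_odd m a k :
  (forall j, j <= n -> m <= f j) -> (forall j, j <= n -> odd (f j) = odd j) ->
  f a = m -> a < k <= n -> odd (k - a) -> f k.-1 = m -> f k = m.+1.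
Proof.
move=> f_ge f_odd fa /andP[ak kn] odd_ka fk1.
have k_gt0 : 0 < k by apply: leq_ltn_trans ak.
have k1n : k.-1 < n by rewrite prednK.
have := f_succ_le k1n; rewrite prednK // fk1 => fk_le.
have fk_neq : f k != m.
  apply: contraTneq odd_ka => fkm.
  by rewrite oddB ?(ltnW ak) // -f_odd // fkm -fa f_odd ?addbb // ltnW ?(leq_trans ak).
by have := f_ge k kn; lia.
Qed.

End UnitStepProfile.

Theorem corollary1 (V : finType) (g : rel V) (T v : dtree V) :
  simple_graph g -> distance_hereditary g -> decomposition_tree g T ->
  subtree v T -> is_internal v ->
  gamma v 0 = gmin v + galpha v ->
  gamma v #|dTS v| = gmin v + (#|dTS v| - gbeta v) ->
  (forall i, i <= (gbeta v - galpha v)./2 -> gamma v (galpha v + 2 * i) = gmin v) ->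
  forall k, k <= #|dTS v| ->
    [/\ k <= galpha v -> gamma v k = gmin v + (galpha v - k),
        gbeta v <= k -> gamma v k = gmin v + (k - gbeta v),
        galpha v < k < gbeta v -> ~~ odd (k - galpha v) -> gamma v k = gmin v &
        ~~ (k <= galpha v) -> ~~ (gbeta v <= k) ->
          ~~ ((galpha v < k < gbeta v) && ~~ odd (k - galpha v)) ->
          gamma v k = (gmin v).+1].
Proof.
move=> _ _ [uniq_T _ _] /subtree_uniq/(_ uniq_T) uniq_v _ gamma0 gamma_n gamma_even k kn.
have [a_le gamma_a] := galpha_spec uniq_v; have [b_le gamma_b] := gbeta_spec uniq_v.
have step_up := gamma_succ_le uniq_v; have step_down := gamma_le_succ uniq_v.
have even_min j : galpha v <= j <= gbeta v -> ~~ odd (j - galpha v) -> gamma v j = gmin v.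
  case/andP=> aj jb ev; rewrite -(subnKC aj) -(even_halfK ev) -mul2n.
  exact/gamma_even/half_leq/leq_sub2r.
split.
- exact: (profile_left (k := k) step_up step_down a_le gamma_a gamma0).
- exact: (profile_right (k := k) step_up step_down kn gamma_b gamma_n).
- by case/andP=> /ltnW ak /ltnW kb; apply: even_min; rewrite ak.
rewrite -!ltnNge => ak kb; rewrite ak kb /= negbK => odd_ka.
have akn : galpha v < k <= #|dTS v| by rewrite ak.
have gamma_pred : gamma v k.-1 = gmin v.
  have ka_pred : k - galpha v = (k.-1 - galpha v).+1 by lia.
  by apply: even_min; [apply/andP; split; lia | rewrite ka_pred in odd_ka].
exact: (profile_odd step_up (gmin_le_gamma (t := v)) (odd_gamma uniq_v) gamma_a
  akn odd_ka gamma_pred).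
Qed.
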